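(* Each of the matroids $U_{2,4}\oplus U_{1,1}$, $U_{2,4}\oplus U_{0,1}$ and $R_6$ is an excluded minor for $\mathcal{Z}$ and is also an excluded minor for $\mathcal{R}$.
   Context: $\mathcal{Z}$ is the class of matroids $M$ such that for every $e\in E(M)$, $M\backslash e$ or $M/e$ is binary. $\mathcal{R}$ is the class of matroids that are binary or can be obtained from a binary matroid by relaxing a circuit-hyperplane (relaxing a circuit-hyperplane $H$ of $M$ means forming the matroid on $E(M)$ whose bases are the bases of $M$ together with $H$). An excluded minor for a minor-closed class is a matroid not in the class all of whose proper minors are in the class. $R_6$ is the six-element rank-3 matroid whose non-spanning circuits are exactly two disjoint triangles, i.e. $R_6\cong U_{2,4}\oplus_2U_{2,4}$. *)

From HB Require Import structures.
From mathcomp Require Import all_boot all_order all_algebra.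
Set Implicit Arguments. Unset Strict Implicit. Unset Printing Implicit Defensive.
Import GRing.Theory.

Record matroid (T : finType) := Matroid { ground : {set T}; bases : {set {set T}} }.

Section Matroids.
Variable T : finType.
Implicit Types (M N : matroid T) (X Y C D H : {set T}).

Definition is_matroid M : Prop :=
  [/\ bases M != set0,
      forall B, B \in bases M -> B \subset ground M &
      forall B1 B2, B1 \in bases M -> B2 \in bases M ->
        forall x, x \in B1 :\: B2 ->
          exists2 y, y \in B2 :\: B1 & (y |: (B1 :\ x)) \in bases M].

Definition rank M X : nat := \max_(B in bases M) #|X :&: B|.

Definition indep M X : bool := [exists B in bases M, X \subset B].

Definition circuit M X : bool :=
  [&& X \subset ground M, ~~ indep M X & [forall x in X, indep M (X :\ x)]].

Definition flat M X : bool :=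
  (X \subset ground M) &&
  [forall e in ground M :\: X, rank M X < rank M (e |: X)].

Definition hyperplane M X : bool :=
  flat M X && ((rank M X).+1 == rank M (ground M)).

Definition circuit_hyperplane M H : bool := circuit M H && hyperplane M H.

Definition relax M H : matroid T := Matroid (ground M) (H |: bases M).

Definition minor M C D : matroid T :=
  let E' := ground M :\: (C :|: D) in
  let r' := fun X => rank M (X :|: C) - rank M C in
  Matroid E' [set X : {set T} | [&& X \subset E', r' X == #|X| & #|X| == r' E']].

Definition deletion M e := minor M set0 [set e].
Definition contraction M e := minor M [set e] set0.

(* M is binary: represented over GF(2) by vectors f e, e in E:
   the bases are exactly the subsets whose vectors form a basis of the span of f(E). *)
Definition binary M : Prop :=
  exists (n : nat) (f : T -> 'rV['F_2]_n),
    forall X, X \in bases M <->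
      [/\ X \subset ground M, free [seq f x | x <- enum X] &
          (<< [seq f x | x <- enum (ground M)] >> <= << [seq f x | x <- enum X] >>)%VS].

Definition classZ M : Prop :=
  forall e, e \in ground M -> binary (deletion M e) \/ binary (contraction M e).

Definition classR M : Prop :=
  binary M \/
  exists N H, [/\ is_matroid N, binary N, circuit_hyperplane N H & M = relax N H].

Definition excluded_minor (P : matroid T -> Prop) M : Prop :=
  [/\ is_matroid M, ~ P M &
      forall C D, C \subset ground M -> D \subset ground M -> [disjoint C & D] ->
        C :|: D != set0 -> P (minor M C D)].

End Matroids.

(* U_{2,4} ⊕ U_{1,1} on {0,..,4}: 4 is a coloop *)
Definition U24_U11 : matroid ('I_5) :=
  Matroid [set: 'I_5] [set B : {set 'I_5} | (#|B| == 3) && (ord_max \in B)].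

(* U_{2,4} ⊕ U_{0,1} on {0,..,4}: 4 is a loop *)
Definition U24_U01 : matroid ('I_5) :=
  Matroid [set: 'I_5] [set B : {set 'I_5} | (#|B| == 2) && (ord_max \notin B)].

(* R_6 on {0,..,5}: rank 3, non-spanning circuits exactly {0,1,2} and {3,4,5} *)
Definition tri1 : {set 'I_6} := [set i : 'I_6 | i < 3].
Definition tri2 : {set 'I_6} := [set i : 'I_6 | 3 <= i].
Definition R6 : matroid ('I_6) :=
  Matroid [set: 'I_6] [set B : {set 'I_6} | [&& #|B| == 3, B != tri1 & B != tri2]].

From HB Require Import structures.
From mathcomp Require Import all_boot all_order all_algebra.
Set Implicit Arguments. Unset Strict Implicit. Unset Printing Implicit Defensive.
Import GRing.Theory.

(* These matroids have at most six elements, so the proof is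
   a certified computation resting on two certificates.  Non-binarity: if all
   six sets {x, y} ∪ Z with x, y among four elements a, b, c, d are bases,
   then over GF(2) the vectors of c and d agree modulo span(Z), so {c, d} ∪ Z
   is not a basis (u24_not_binary).  Binarity: the fundamental-circuit vectors
   relative to one basis are checked to represent exactly the bases, deciding
   GF(2)-freeness and spanning through subset sums (free_cfree, span_subsums). *)

Section NotBinary.
Local Open Scope ring_scope.
Variable T : finType.

Lemma F2_cases (a : 'F_2) : a = 0 \/ a = 1.
Proof. by case: a => [[|[|]]] //= H; [left|right]; apply: val_inj. Qed.

Lemma span_setU1 m (f : T -> 'rV['F_2]_m) x (A : {set T}) :
  (<<[seq f y | y <- enum (x |: A)]>> = <[f x]> + <<[seq f y | y <- enum A]>>)%VS.
Proof.
rewrite -span_cons; apply: eq_span => v; rewrite in_cons.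
apply/mapP/orP => [[y]|[/eqP->|/mapP[y hy ->]]].
- rewrite mem_enum in_setU1 => /orP[/eqP-> ->|hy ->]; first by left.
  by right; apply: map_f; rewrite mem_enum.
- by exists x; rewrite ?mem_enum ?setU11.
- by exists y; rewrite // mem_enum in_setU1; rewrite mem_enum in hy; rewrite hy orbT.
Qed.

Lemma free_setU1 m (f : T -> 'rV['F_2]_m) x (A : {set T}) : x \notin A ->
  free [seq f y | y <- enum (x |: A)] -> f x \notin <<[seq f y | y <- enum A]>>%VS.
Proof.
move=> hx; have hp : perm_eq (enum (x |: A)) (x :: enum A).
  apply: uniq_perm; first exact: enum_uniq.
    by rewrite /= mem_enum hx enum_uniq.
  by move=> y; rewrite in_cons !mem_enum in_setU1.
by rewrite (perm_free (perm_map f hp)) /= free_cons => /andP[].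
Qed.

(* A U_{2,4}-minor obstructs binarity: if a, b, c, d lie outside Z and all six
   sets {x, y} ∪ Z (x, y distinct among a, b, c, d) are bases, then over GF(2)
   the vectors of c and d are both congruent to f a + f b modulo span(Z), so
   {c, d} ∪ Z could not be a basis. *)
Lemma u24_not_binary (M : matroid T) (Z : {set T}) a b c d :
  c \notin a |: Z -> c \notin b |: Z -> d \notin a |: Z -> d \notin b |: Z -> c \notin d |: Z ->
  a |: (b |: Z) \in bases M -> c |: (a |: Z) \in bases M -> c |: (b |: Z) \in bases M ->
  d |: (a |: Z) \in bases M -> d |: (b |: Z) \in bases M -> c |: (d |: Z) \in bases M ->
  ~ binary M.
Proof.
move=> nca ncb nda ndb ncd bab bca bcb bda bdb bcd [m [f Hf]].
pose V (A : {set T}) := <<[seq f y | y <- enum A]>>%VS.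
have fresh x (A : {set T}) : x \notin A -> x |: A \in bases M -> f x \notin V A.
  by move=> hx /Hf[_ hfree _]; apply: free_setU1.
have [_ _ span_ab] := (Hf _).1 bab.
have in_span_ab x (A : {set T}) : x |: A \in bases M -> f x \in V (a |: (b |: Z)).
  move=> hb; apply: (subvP span_ab); apply/memv_span/map_f.
  by rewrite mem_enum; have [hs _ _] := (Hf _).1 hb; apply: (subsetP hs); apply: setU11.
have decomp x : x \notin a |: Z -> x \notin b |: Z -> x |: (a |: Z) \in bases M ->
    x |: (b |: Z) \in bases M -> exists2 z, z \in V Z & f x = f a + f b + z.
  move=> hxa hxb ba bb; have := in_span_ab _ _ ba; rewrite /V !span_setU1.
  move=> /memv_addP[u /vlineP[al ->] [w /memv_addP[u' /vlineP[be ->] [z hz hw]] hx]].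
  rewrite hw in hx; case: (F2_cases al) => hal; subst al.
    case/negP: (fresh _ _ hxb bb); rewrite /V span_setU1 hx scale0r add0r.
    by apply: memv_add => //; apply/vlineP; exists be.
  case: (F2_cases be) => hbe; subst be.
    case/negP: (fresh _ _ hxa ba); rewrite /V span_setU1 hx scale0r add0r scale1r.
    by apply: memv_add => //; apply: memv_line.
  by exists z => //; rewrite hx !scale1r addrA.
have [zc hzc ec] := decomp c nca ncb bca bcb.
have [zd hzd ed] := decomp d nda ndb bda bdb.
case/negP: (fresh _ _ ncd bcd); rewrite /V span_setU1.
have -> : f c = f d + (zc - zd) by rewrite ec ed -[in RHS]addrA [in RHS](addrC zd) subrK.
by apply: memv_add; [apply: memv_line | apply: rpredB].
Qed.

End NotBinary.

Lemma circuit_notin_bases (T : finType) (N : matroid T) H : circuit N H -> H \notin bases N.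
Proof.
case/and3P=> _ dep _; apply: contra dep => hH.
by apply/existsP; exists H; rewrite hH subxx.
Qed.

(* Bit lists encode finite subsets of nat: j belongs to x iff nth false x j.
   [bzip f] combines two bit lists pointwise, padding the shorter with false. *)
Fixpoint bzip (f : bool -> bool -> bool) (u v : seq bool) : seq bool :=
  if u is a :: u' then f a (head false v) :: bzip f u' (behead v) else map (f false) v.

Lemma size_bzip f u v : size (bzip f u v) = maxn (size u) (size v).
Proof.
elim: u v => [|a u IH] v /=; first by rewrite size_map max0n.
by rewrite IH size_behead; case: v => [|b v] /=; rewrite ?maxn0 ?maxnSS.
Qed.

Lemma nth_bzip f u v j : f false false = false ->
  nth false (bzip f u v) j = f (nth false u j) (nth false v j).
Proof.
move=> f0; elim: u v j => [|a u IH] v j /=.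
  rewrite nth_nil; case: (ltnP j (size v)) => hj; first by rewrite (nth_map false).
  by rewrite !nth_default ?size_map.
by case: j => [|j] /=; [case: v | rewrite IH; case: v => [|b v] /=; rewrite ?nth_nil].
Qed.

Definition bxor := bzip addb.
Definition bor := bzip orb.
Definition band := bzip andb.
Definition bdiff := bzip (fun a b => a && ~~ b).

Definition bnil x := ~~ has id x.
Definition bsub x y := bnil (bdiff x y).
Definition bcnt x := count id x.

Lemma bnilP x : reflect (forall j, nth false x j = false) (bnil x).
Proof.
apply: (iffP hasPn) => [H j | H b /(nthP false) [j _ <-]]; last by rewrite H.
case: (ltnP j (size x)) => hj; last by rewrite nth_default.
exact/negbTE/H/mem_nth.
Qed.

(* [has] and [all] with short-circuit evaluation: vm_compute evaluates the
   arguments of [||] and [&&] eagerly, so the certificate checkers below use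
   these versions, or an explicit [if], where early exit saves work *)
Fixpoint lhas (A : Type) (a : pred A) (s : seq A) : bool :=
  if s is x :: s' then (if a x then true else lhas a s') else false.

Fixpoint lall (A : Type) (a : pred A) (s : seq A) : bool :=
  if s is x :: s' then (if a x then lall a s' else false) else true.

Lemma lhasE (A : Type) (a : pred A) s : lhas a s = has a s.
Proof. by elim: s => //= x s ->. Qed.

Lemma lallE (A : Type) (a : pred A) s : lall a s = all a s.
Proof. by elim: s => //= x s ->. Qed.

Fixpoint allb m : seq (seq bool) :=
  if m is m'.+1 then let r := allb m' in map (cons false) r ++ map (cons true) r
  else [:: [::]].

Lemma allbP m s : (s \in allb m) = (size s == m).
Proof.
have cons_inj (c : bool) : injective (cons c) by move=> u v [].
elim: m s => [|m IH] [|a s] //; rewrite /= mem_cat.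
  by apply/negbTE; rewrite negb_or; apply/andP; split; apply/mapP => -[].
rewrite eqSS -IH; case: a.
  have -> : (true :: s \in map (cons false) (allb m)) = false.
    by apply/negbTE/mapP => -[t _ []].
  by rewrite mem_map.
have -> : (false :: s \in map (cons true) (allb m)) = false.
  by apply/negbTE/mapP => -[t _ []].
by rewrite mem_map // orbF.
Qed.

Section GF2Vectors.
Local Open Scope ring_scope.
Variable m : nat.

Definition rowv (u : seq bool) : 'rV['F_2]_m := \row_(j < m) (nth false u j)%:R.

Lemma natr_addb (a b : bool) : ((a (+) b)%:R : 'F_2) = a%:R + b%:R.
Proof. by case: a; case: b; rewrite ?add0r ?addr0 //; apply: val_inj. Qed.

Lemma natr_bool_inj (a b : bool) : (a%:R : 'F_2) = b%:R -> a = b.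
Proof. by case: a; case: b => // /esym/eqP; rewrite oner_eq0. Qed.

Lemma rowv_bxor u v : rowv (bxor u v) = rowv u + rowv v.
Proof. by apply/rowP => j; rewrite !mxE nth_bzip // natr_addb. Qed.

Lemma rowv_nil : rowv [::] = 0.
Proof. by apply/rowP => j; rewrite !mxE nth_nil. Qed.

Lemma rowv_eq u v : (size u <= m)%N -> (size v <= m)%N ->
  (rowv u == rowv v) = bnil (bxor u v).
Proof.
move=> hu hv; apply/eqP/bnilP => [H j | H].
  rewrite nth_bzip //; case: (ltnP j m) => hjm.
    move/rowP: H => /(_ (Ordinal hjm)); rewrite !mxE /= => /natr_bool_inj ->.
    by rewrite addbb.
  by rewrite !nth_default // (leq_trans _ hjm).
apply/rowP => j; rewrite !mxE; move: (H j); rewrite nth_bzip //.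
by case: (nth false u j); case: (nth false v j).
Qed.

Fixpoint subsums (s : seq (seq bool)) : seq (seq bool) :=
  if s is v :: s' then let r := subsums s' in r ++ map (bxor v) r else [:: [::]].

Lemma size_subsums s u : all (fun v => size v <= m)%N s -> u \in subsums s -> (size u <= m)%N.
Proof.
elim: s u => [|v s IH] u /=; first by rewrite inE => _ /eqP->.
move=> /andP[hv hs]; rewrite mem_cat => /orP[/IH-> //| /mapP[w hw ->]].
by rewrite size_bzip geq_max hv IH.
Qed.

Lemma span_subsums (x : 'rV['F_2]_m) s :
  (x \in <<map rowv s>>%VS) = has (fun u => x == rowv u) (subsums s).
Proof.
elim: s x => [|v s IH] x /=; first by rewrite span_nil memv0 rowv_nil orbF.
rewrite span_cons has_cat has_map; apply/memv_addP/orP.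
  move=> [u /vlineP[c ->] [w hw ->]]; move: hw; rewrite IH => /hasP[u' hu' /eqP->].
  case: (F2_cases c) => ->; [left; rewrite scale0r add0r | right; rewrite scale1r].
    by apply/hasP; exists u'.
  by apply/hasP; exists u' => //=; rewrite rowv_bxor.
move=> [/hasP[u hu /eqP->] | /hasP[u hu /eqP->]].
  by exists 0; rewrite ?mem0v //; exists (rowv u); rewrite ?add0r // IH; apply/hasP; exists u.
exists (rowv v); first exact: memv_line.
by exists (rowv u); rewrite ?rowv_bxor // IH; apply/hasP; exists u.
Qed.

Fixpoint cfree (s : seq (seq bool)) : bool :=
  if s is v :: s' then
    (if lhas (fun u => bnil (bxor v u)) (subsums s') then false else cfree s')
  else true.

Lemma free_cfree s : all (fun v => size v <= m)%N s -> free (map rowv s) = cfree s.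
Proof.
elim: s => [|v s IH] /=; first by rewrite nil_free.
move=> /andP[hv hs]; rewrite free_cons IH // span_subsums lhasE.
have -> : has (fun u => rowv v == rowv u) (subsums s) = has (fun u => bnil (bxor v u)) (subsums s).
  by apply: eq_in_has => u hu; rewrite rowv_eq // (size_subsums hs hu).
by case: has.
Qed.

End GF2Vectors.

Section Encoding.
Variable n : nat.
Local Notation k := n.+1.
Local Notation T := 'I_n.+1.
Implicit Types (A B C D X : {set T}) (x b : seq bool) (L : seq (seq bool)).

Definition enc A : seq bool := mkseq (fun i => inord i \in A) k.
Definition dec b : {set T} := [set i : T | nth false b i].
Definition sing j := mkseq (fun i => i == j) k.
Definition zeros := nseq k false.

Lemma size_enc A : size (enc A) = k. Proof. exact: size_mkseq. Qed.

Lemma nth_enc A (i : T) : nth false (enc A) i = (i \in A).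
Proof. by rewrite nth_mkseq // inord_val. Qed.

Lemma nth_enc_nat A j : j < k -> nth false (enc A) j = (inord j \in A).
Proof. by move=> h; rewrite nth_mkseq. Qed.

Lemma dec_enc A : dec (enc A) = A.
Proof. by apply/setP=> i; rewrite inE nth_enc. Qed.

Lemma enc_dec b : size b = k -> enc (dec b) = b.
Proof.
move=> hs; apply: (@eq_from_nth _ false); rewrite ?size_enc ?hs // => j hj.
by rewrite nth_enc_nat // inE inordK.
Qed.

Lemma enc_inj : injective enc.
Proof. by move=> A B h; rewrite -(dec_enc A) h dec_enc. Qed.

Lemma encP A b : size b = k -> (forall i : T, nth false b i = (i \in A)) -> enc A = b.
Proof.
move=> hs h; apply: (@eq_from_nth _ false); rewrite ?size_enc ?hs // => j hj.
by rewrite nth_enc_nat // -h inordK.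
Qed.

Lemma enc_bzip (f : bool -> bool -> bool) A B : f false false = false ->
  bzip f (enc A) (enc B) = enc [set i | f (i \in A) (i \in B)].
Proof.
move=> f0; apply/esym/encP; first by rewrite size_bzip !size_enc maxnn.
by move=> i; rewrite nth_bzip // !nth_enc inE.
Qed.

Lemma enc_setU A B : enc (A :|: B) = bor (enc A) (enc B).
Proof. by rewrite /bor enc_bzip //; congr enc; apply/setP => i; rewrite !inE. Qed.

Lemma enc_setI A B : enc (A :&: B) = band (enc A) (enc B).
Proof. by rewrite /band enc_bzip //; congr enc; apply/setP => i; rewrite !inE. Qed.

Lemma enc_setD A B : enc (A :\: B) = bdiff (enc A) (enc B).
Proof. by rewrite /bdiff enc_bzip //; congr enc; apply/setP => i; rewrite !inE andbC. Qed.

Lemma enc_set1 (x : T) : enc [set x] = sing x.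
Proof. by apply: encP; rewrite ?size_mkseq // => i; rewrite nth_mkseq // inE. Qed.

Lemma enc_set0 : enc set0 = zeros.
Proof. by apply: encP; rewrite ?size_nseq // => i; rewrite nth_nseq ltn_ord inE. Qed.

Lemma enc_setT : enc setT = nseq k true.
Proof. by apply: encP; rewrite ?size_nseq // => i; rewrite nth_nseq ltn_ord inE. Qed.

Lemma bnil_enc A : bnil (enc A) = (A == set0).
Proof.
apply/bnilP/eqP => [H | -> j]; last by rewrite enc_set0 nth_nseq if_same.
by apply/setP => i; rewrite inE -nth_enc H.
Qed.

Lemma bsub_enc A B : bsub (enc A) (enc B) = (A \subset B).
Proof. by rewrite /bsub -enc_setD bnil_enc setD_eq0. Qed.

Lemma enum_val_perm A : perm_eq (map val (enum A)) [seq j <- iota 0 k | nth false (enc A) j].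
Proof.
apply: uniq_perm; first by rewrite (map_inj_uniq val_inj) enum_uniq.
  by rewrite filter_uniq // iota_uniq.
move=> j; rewrite mem_filter mem_iota /=; apply/mapP/andP => [[x hx ->]|[hn hj]].
  by rewrite nth_enc -mem_enum hx ltn_ord.
by exists (inord j); rewrite ?mem_enum -?nth_enc_nat ?inordK.
Qed.

Lemma bcnt_enc A : bcnt (enc A) = #|A|.
Proof.
rewrite cardE -(size_map val) (perm_size (enum_val_perm A)) size_filter.
rewrite /bcnt /enc /mkseq count_map; apply: eq_in_count => j.
by rewrite mem_iota /= => hj; rewrite nth_enc_nat.
Qed.

Lemma enc_in_allb A : enc A \in allb k.
Proof. by rewrite allbP size_enc. Qed.

Lemma forall_iota (P : pred T) : [forall i, P i] = all (fun j => P (inord j)) (iota 0 k).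
Proof.
apply/forallP/allP => H; first by move=> j _; apply: H.
by move=> i; have := H i; rewrite mem_iota ltn_ord inord_val; apply.
Qed.

Definition Rep (M : matroid T) E L :=
  [/\ enc (ground M) = E, forall A, (A \in bases M) = (enc A \in L)
    & all (fun b => size b == k) L].

Lemma Rep_size M E L b : Rep M E L -> b \in L -> size b = k.
Proof. by case=> _ _ /allP HL /HL /eqP. Qed.

Lemma Rep_allb M E (P : pred (seq bool)) : enc (ground M) = E ->
  (forall A, (A \in bases M) = P (enc A)) -> Rep M E [seq x <- allb k | P x].
Proof.
move=> hE HB; split => // [A|]; first by rewrite HB mem_filter enc_in_allb andbT.
by apply/allP => x; rewrite mem_filter allbP => /andP[].
Qed.

Lemma Rep_dec M E L b : Rep M E L -> b \in L -> dec b \in bases M.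
Proof. by move=> R hb; case: (R) => _ -> _; rewrite enc_dec // (Rep_size R). Qed.

(* the rank of x, as a maximum written with foldr so that it evaluates
   (big operators are locked) *)
Definition crank L x := foldr maxn 0 [seq bcnt (band x b) | b <- L].

Lemma rank_rep M E L X : Rep M E L -> rank M X = crank L (enc X).
Proof.
move=> R; have [_ HB _] := R.
rewrite /rank /crank foldrE big_map; apply/eqP; rewrite eqn_leq; apply/andP; split.
  apply/bigmax_leqP => B hB; rewrite -bcnt_enc enc_setI.
  by apply: leq_bigmax_seq; rewrite // -HB.
apply/bigmax_leqP_seq => b hb _; rewrite -(enc_dec (Rep_size R hb)) -enc_setI bcnt_enc.
by apply: leq_bigmax_cond; apply: Rep_dec R hb.
Qed.

Definition cminor_ground E c d := bdiff E (bor c d).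
Definition cminor_bases E L c d :=
  let E' := cminor_ground E c d in
  let r' x := crank L (bor x c) - crank L c in
  let rE := r' E' in
  [seq x <- allb k | [&& bsub x E', r' x == bcnt x & bcnt x == rE]].

Lemma minor_rep M E L C D : Rep M E L ->
  Rep (minor M C D) (cminor_ground E (enc C) (enc D)) (cminor_bases E L (enc C) (enc D)).
Proof.
move=> R; have [hE _ _] := R; apply: Rep_allb => [|A].
  by rewrite /cminor_ground -hE -enc_setU -enc_setD.
cbv beta zeta; rewrite inE /cminor_ground -hE -!enc_setU -enc_setD bsub_enc !bcnt_enc.
by rewrite -!(rank_rep _ R) -enc_setU -(rank_rep _ R).
Qed.

Definition cindep L x := has (bsub x) L.

Lemma indep_rep M E L X : Rep M E L -> indep M X = cindep L (enc X).
Proof.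
move=> R; have [_ HB _] := R.
apply/existsP/hasP => [[B /andP[hB hXB]] | [b hb hsub]].
  by exists (enc B); rewrite -?HB ?bsub_enc.
exists (dec b); rewrite (Rep_dec R) //=.
by rewrite -bsub_enc enc_dec // (Rep_size R).
Qed.

Definition ccircuit E L x := [&& bsub x E, ~~ cindep L x &
  all (fun j => nth false x j ==> cindep L (bdiff x (sing j))) (iota 0 k)].

Lemma circuit_rep M E L X : Rep M E L -> circuit M X = ccircuit E L (enc X).
Proof.
move=> R; have [hE _ _] := R.
rewrite /circuit /ccircuit -hE bsub_enc (indep_rep _ R) forall_iota.
congr [&& _, _ & _]; apply: eq_in_all => j; rewrite mem_iota => /andP[_ hj].
by rewrite -nth_enc_nat // (indep_rep _ R) enc_setD enc_set1 inordK.
Qed.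

Definition ccirchyp E L x :=
  [&& ccircuit E L x, bsub x E,
      all (fun j => (nth false E j && ~~ nth false x j) ==>
         (crank L x < crank L (bor (sing j) x))) (iota 0 k)
    & (crank L x).+1 == crank L E].

Lemma cirhyp_rep M E L X : Rep M E L -> circuit_hyperplane M X = ccirchyp E L (enc X).
Proof.
move=> R; have [hE _ _] := R.
rewrite /circuit_hyperplane /hyperplane /flat /ccirchyp (circuit_rep _ R) -hE bsub_enc.
rewrite forall_iota !(rank_rep _ R) -andbA; congr [&& _, _, _ & _].
apply: eq_in_all => j; rewrite mem_iota => /andP[_ hj].
by rewrite inE -!nth_enc_nat // andbC !(rank_rep _ R) enc_setU enc_set1 inordK.
Qed.

Definition cism E L := [&& L != [::], all (fun b => bsub b E) L &
  all (fun b1 => all (fun b2 => all (fun i => (nth false b1 i && ~~ nth false b2 i) ==>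
     has (fun j => [&& nth false b2 j, ~~ nth false b1 j &
        bor (sing j) (bdiff b1 (sing i)) \in L]) (iota 0 k)) (iota 0 k)) L) L].

Lemma ism_rep M E L : Rep M E L -> cism E L -> is_matroid M.
Proof.
move=> R /and3P[hne hsub hex]; have [hE HB _] := R; split.
- have [b hb] : exists b, b \in L by case: (L) hne => // b ? _; exists b; rewrite inE eqxx.
  by apply/set0Pn; exists (dec b); apply: Rep_dec R hb.
- by move=> B; rewrite HB => /(allP hsub); rewrite -hE bsub_enc.
- move=> B1 B2; rewrite !HB => h1 h2 x /setDP[hx1 hx2].
  have hx : val x \in iota 0 k by rewrite mem_iota ltn_ord.
  have := allP (allP (allP hex _ h1) _ h2) _ hx.
  rewrite !nth_enc hx1 hx2 => /hasP[j]; rewrite mem_iota => /andP[_ hj].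
  move=> /and3P[hj2 hj1 hin]; exists (inord j).
    by rewrite inE -!nth_enc_nat // hj2 hj1.
  by rewrite HB enc_setU enc_set1 enc_setD enc_set1 inordK.
Qed.

End Encoding.

Section Certificates.
Variable n : nat.
Local Notation k := n.+1.
Local Notation T := 'I_n.+1.
Local Notation sing := (sing n).
Local Notation dec := (dec n).
Local Notation cminor_bases := (cminor_bases n).
Implicit Types (M N : matroid T) (E x z : seq bool) (L g : seq (seq bool)).

Definition gvec g (i : T) := rowv k (nth [::] g i).

Definition gs g x := [seq nth [::] g j | j <- iota 0 k & nth false x j].

Definition cspan g s E := let S := subsums s in
  lall (fun j => if nth false E j then lhas (fun u => bnil (bxor (nth [::] g j) u)) S else true)
    (iota 0 k).

Section Vectors.
Variable g : seq (seq bool).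
Hypothesis size_g : all (fun v => size v <= k) g.

Lemma size_nth_g j : size (nth [::] g j) <= k.
Proof.
case: (ltnP j (size g)) => [hj | hj]; last by rewrite nth_default.
exact: (allP size_g _ (mem_nth [::] hj)).
Qed.

Lemma size_gs x : all (fun v => size v <= k) (gs g x).
Proof. by apply/allP => v /mapP[j _ ->]; apply: size_nth_g. Qed.

Lemma gvec_perm (A : {set T}) : perm_eq (map (gvec g) (enum A)) (map (rowv k) (gs g (enc A))).
Proof.
have -> : map (gvec g) (enum A) = map (rowv k) (map (nth [::] g) (map val (enum A))).
  by rewrite -!map_comp.
by apply/perm_map/perm_map/enum_val_perm.
Qed.

Lemma free_gvec (X : {set T}) : free [seq gvec g i | i <- enum X] = cfree (gs g (enc X)).
Proof. by rewrite (perm_free (gvec_perm X)) free_cfree ?size_gs. Qed.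

Lemma span_gvec (A X : {set T}) :
  (<< [seq gvec g i | i <- enum A] >> <= << [seq gvec g i | i <- enum X] >>)%VS
  = cspan g (gs g (enc X)) (enc A).
Proof.
have hgs := size_gs (enc X).
rewrite (eq_span (perm_mem (gvec_perm X))) /cspan lallE.
apply/span_subvP/allP => [H j hj | H v /mapP[x hx ->]].
  apply/implyP => hjA; rewrite lhasE; move: hj; rewrite mem_iota /= => hj.
  have : gvec g (inord j) \in [seq gvec g i | i <- enum A].
    by apply: map_f; rewrite mem_enum -nth_enc_nat.
  move/H; rewrite span_subsums => /hasP[u hu /eqP e]; apply/hasP; exists u => //.
  by rewrite -(@rowv_eq k) ?size_nth_g ?(size_subsums hgs hu) // -e /gvec inordK.
have := H (val x); rewrite mem_iota ltn_ord nth_enc -mem_enum hx lhasE => /(_ isT).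
move=> /hasP[u hu e]; rewrite span_subsums; apply/hasP; exists u => //.
by rewrite /gvec (@rowv_eq k) ?size_nth_g ?(size_subsums hgs hu).
Qed.

End Vectors.

Definition cbincheck E L g := lall (fun x => (x \in L) ==
  (if bsub x E then (if cfree (gs g x) then cspan g (gs g x) E else false) else false)) (allb k).

Lemma binary_cert M E L g : Rep M E L -> all (fun v => size v <= k) g ->
  cbincheck E L g -> binary M.
Proof.
case=> hE HB _ hg; rewrite /cbincheck lallE => hc; exists k, (gvec g) => X.
have := allP hc (enc X) (enc_in_allb X); rewrite -HB => /eqP ->.
rewrite -hE bsub_enc free_gvec // span_gvec //.
by split => [/and3P | H]; last apply/and3P.
Qed.

(* the fundamental-circuit representation with respect to the first basis B
   of L: elements of B get unit vectors, an element i of E outside B gets the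
   indicator of its fundamental circuit {j in B | B - j + i is a basis} *)
Definition gen E L : seq (seq bool) :=
  let B := head [::] L in
  mkseq (fun i => if nth false B i then sing i
                  else if nth false E i then
                    mkseq (fun j => nth false B j && (bor (sing i) (bdiff B (sing j)) \in L)) k
                  else [::]) k.

Lemma size_gen E L : all (fun v => size v <= k) (gen E L).
Proof.
apply/allP => v /mapP[i _ ->]; rewrite fun_if size_mkseq.
by case: ifP; rewrite // fun_if size_mkseq; case: ifP.
Qed.

Definition cbinary E L := cbincheck E L (gen E L).

Lemma cbinary_sound M E L : Rep M E L -> cbinary E L -> binary M.
Proof. by move=> R; apply: binary_cert R (size_gen E L). Qed.

Definition u24ok L z (a b c d : nat) :=
  let s i j := bor (sing i) (bor (sing j) z) in
  let out i j := ~~ nth false (bor (sing j) z) i in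
  [&& out c a, out c b, out d a, out d b & out c d] &&
  ([&& s a b \in L, s c a \in L & s c b \in L] && [&& s d a \in L, s d b \in L & s c d \in L]).

Lemma u24ok_sound M E L z (a b c d : nat) : Rep M E L -> size z = k ->
  a < k -> b < k -> c < k -> d < k -> u24ok L z a b c d -> ~ binary M.
Proof.
move=> R hz ha hb hc hd; have [_ HB _] := R.
have enc2 i j : i < k -> j < k ->
    enc (inord i |: (inord j |: dec z)) = bor (sing i) (bor (sing j) z).
  by move=> hi hj; rewrite !enc_setU !enc_set1 !inordK // enc_dec.
have out2 i j : i < k -> j < k ->
    (inord i \notin (inord j |: dec z)) = ~~ nth false (bor (sing j) z) i.
  by move=> hi hj; rewrite -nth_enc_nat // enc_setU enc_set1 inordK // enc_dec.
rewrite /u24ok -!out2 // -!enc2 // -!HB.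
move=> /andP[/and5P[n1 n2 n3 n4 n5] /andP[/and3P[m1 m2 m3] /and3P[m4 m5 m6]]].
exact: (u24_not_binary n1 n2 n3 n4 n5 m1 m2 m3 m4 m5 m6).
Qed.

Definition cu24 L := has (fun B =>
  let inB := [seq i <- iota 0 k | nth false B i] in
  let outB := [seq i <- iota 0 k | ~~ nth false B i] in
  has (fun a => has (fun b => has (fun c => has (fun d =>
    u24ok L (bdiff B (bor (sing a) (sing b))) a b c d) outB) outB) inB) inB) L.

Lemma cu24_sound M E L : Rep M E L -> cu24 L -> ~ binary M.
Proof.
move=> R /hasP[B hB /hasP[a ha /hasP[b hb /hasP[c hc /hasP[d hd]]]]].
move: ha hb hc hd; rewrite !mem_filter !mem_iota.
move=> /andP[_ ha] /andP[_ hb] /andP[_ hc] /andP[_ hd].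
apply: (u24ok_sound R) ha hb hc hd.
by rewrite !size_bzip !size_mkseq (Rep_size R hB) !maxnn.
Qed.

(* non-membership in R: M is not binary, and removing from its bases any h
   that is a circuit-hyperplane of the remaining ones leaves a non-binary
   matroid, so M is no relaxation of a binary matroid *)
Definition cnorelax E L := all (fun h =>
  let L' := [seq b <- L | b != h] in ccirchyp n E L' h ==> cu24 L') L.

Lemma notR_sound M E L : Rep M E L -> cu24 L -> cnorelax E L -> ~ classR M.
Proof.
move=> R hu hc [|[N [H [_ hbin hch hM]]]]; first exact: cu24_sound R hu.
subst M; have [hE HB HL] := R.
have RN : Rep N E [seq b <- L | b != enc H].
  split; first by rewrite -hE.
    move=> A; rewrite mem_filter -HB /= in_setU1 (inj_eq (@enc_inj n)).
    case: (eqVneq A H) => [->|hne] //=; apply/negbTE.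
    by apply: circuit_notin_bases; case/andP: hch.
  by apply/allP => b; rewrite mem_filter => /andP[_ /(allP HL)].
have hH : enc H \in L by rewrite -HB /= setU11.
have := allP hc _ hH; rewrite /= -(cirhyp_rep _ RN) hch /=.
by move/(cu24_sound RN).
Qed.

Definition checkR E L := if cbinary E L then true else lhas (fun h =>
  let L' := [seq b <- L | b != h] in
  if ccirchyp n E L' h then (if cbinary E L' then cism n E L' else false) else false) L.

Lemma checkR_sound N E L : Rep N E L -> checkR E L -> classR N.
Proof.
move=> R; rewrite /checkR lhasE => /orP[h|/hasP[h hh /and3P[hch hb hm]]].
  by left; apply: cbinary_sound R h.
right; have [hE HB HL] := R; have hs := Rep_size R hh.
pose N' := Matroid (ground N) [set A | (A \in bases N) && (A != dec h)].
have RN' : Rep N' E [seq b <- L | b != h].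
  split => //= [A|].
    by rewrite inE mem_filter HB andbC -(inj_eq (@enc_inj n)) enc_dec.
  by apply/allP => b; rewrite mem_filter => /andP[_ /(allP HL)].
exists N', (dec h); split.
- exact: ism_rep RN' hm.
- exact: cbinary_sound RN' hb.
- by rewrite (cirhyp_rep _ RN') enc_dec.
have eqB : dec h |: [set A | (A \in bases N) && (A != dec h)] = bases N.
  apply/setP => A; rewrite in_setU1 inE.
  by case: eqVneq => [->|] /=; [rewrite (Rep_dec R) | rewrite andbT].
by rewrite /relax /= eqB; case: (N).
Qed.

Lemma deletion_rep M E L (e : T) : Rep M E L ->
  Rep (deletion M e) (cminor_ground E (zeros n) (sing e))
    (cminor_bases E L (zeros n) (sing e)).
Proof. by move=> R; rewrite -enc_set0 -enc_set1; apply: minor_rep. Qed.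

Lemma contraction_rep M E L (e : T) : Rep M E L ->
  Rep (contraction M e) (cminor_ground E (sing e) (zeros n))
    (cminor_bases E L (sing e) (zeros n)).
Proof. by move=> R; rewrite -enc_set0 -enc_set1; apply: minor_rep. Qed.

Definition checkZ E L := lall (fun i => if nth false E i then
    (if cbinary (cminor_ground E (zeros n) (sing i)) (cminor_bases E L (zeros n) (sing i))
     then true
     else cbinary (cminor_ground E (sing i) (zeros n)) (cminor_bases E L (sing i) (zeros n)))
  else true) (iota 0 k).

Lemma checkZ_sound N E L : Rep N E L -> checkZ E L -> classZ N.
Proof.
move=> R; rewrite /checkZ lallE => hc e he; have [hE _ _] := R.
have hEe : nth false E e by rewrite -hE nth_enc.
have := allP hc (val e); rewrite mem_iota ltn_ord hEe => /(_ isT) /orP[h|h].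
  by left; apply: cbinary_sound (deletion_rep e R) h.
by right; apply: cbinary_sound (contraction_rep e R) h.
Qed.

Definition cnotZ E L := has (fun i => [&& nth false E i,
  cu24 (cminor_bases E L (zeros n) (sing i)) & cu24 (cminor_bases E L (sing i) (zeros n))])
  (iota 0 k).

Lemma notZ_sound M E L : Rep M E L -> cnotZ E L -> ~ classZ M.
Proof.
move=> R /hasP[i]; rewrite mem_iota /= => hi /and3P[hEi hd hc] hZ.
have [hE _ _] := R.
have he : inord i \in ground M by rewrite -nth_enc_nat // hE.
have := hZ _ he; rewrite -(@inordK n i hi) in hd hc.
case=> hb; first exact: cu24_sound (deletion_rep _ R) hd hb.
exact: cu24_sound (contraction_rep _ R) hc hb.
Qed.

Definition minor_codes := [seq cd <- allpairs pair (allb k) (allb k) |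
  bnil (band cd.1 cd.2) && ~~ bnil (bor cd.1 cd.2)].

Definition cminors_ok E L := all (fun cd =>
  let E' := cminor_ground E cd.1 cd.2 in let L' := cminor_bases E L cd.1 cd.2 in
  checkZ E' L' && checkR E' L') minor_codes.

Lemma minors_sound M E L : Rep M E L -> cminors_ok E L -> forall C D : {set T},
  [disjoint C & D] -> C :|: D != set0 -> classZ (minor M C D) /\ classR (minor M C D).
Proof.
move=> R hc C D hdis hne.
have hcd : (enc C, enc D) \in minor_codes.
  rewrite mem_filter /= -enc_setI -enc_setU !bnil_enc (disjoint_setI0 hdis) eqxx hne.
  by apply: allpairs_f; apply: enc_in_allb.
have /andP[hz hr] := allP hc _ hcd.
by split; [apply: checkZ_sound (minor_rep C D R) hz | apply: checkR_sound (minor_rep C D R) hr].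
Qed.

Definition cexcluded E L := [&& cism n E L, cnotZ E L, cu24 L, cnorelax E L & cminors_ok E L].

Lemma cexcluded_sound M E L : Rep M E L -> cexcluded E L ->
  excluded_minor (@classZ _) M /\ excluded_minor (@classR _) M.
Proof.
move=> R /and5P[hm hZ hb hrel hmin].
have proper (C D : {set T}) : C \subset ground M -> D \subset ground M -> [disjoint C & D] ->
    C :|: D != set0 -> classZ (minor M C D) /\ classR (minor M C D).
  by move=> _ _; apply: (minors_sound R hmin).
split; split; [exact: ism_rep R hm | exact: notZ_sound R hZ | | exact: ism_rep R hm
  | exact: notR_sound R hb hrel | ]; by move=> C D *; case: (proper C D).
Qed.

End Certificates.

Definition code_U24_U11 := [seq x <- allb 5 | (bcnt x == 3) && nth false x 4].
Definition code_U24_U01 := [seq x <- allb 5 | (bcnt x == 2) && ~~ nth false x 4].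
Definition code_tri1 := [:: true; true; true; false; false; false].
Definition code_tri2 := [:: false; false; false; true; true; true].
Definition code_R6 := [seq x <- allb 6 | [&& bcnt x == 3, x != code_tri1 & x != code_tri2]].

Lemma rep_U24_U11 : Rep U24_U11 (nseq 5 true) code_U24_U11.
Proof.
apply: Rep_allb => [|A]; first exact: enc_setT.
by rewrite inE bcnt_enc (nth_enc A ord_max).
Qed.

Lemma rep_U24_U01 : Rep U24_U01 (nseq 5 true) code_U24_U01.
Proof.
apply: Rep_allb => [|A]; first exact: enc_setT.
by rewrite inE bcnt_enc (nth_enc A ord_max).
Qed.

Lemma rep_R6 : Rep R6 (nseq 6 true) code_R6.
Proof.
have enc_tri1 : enc tri1 = code_tri1.
  by apply: encP => // -[[|[|[|[|[|[|i]]]]]] hi]; rewrite inE.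
have enc_tri2 : enc tri2 = code_tri2.
  by apply: encP => // -[[|[|[|[|[|[|i]]]]]] hi]; rewrite inE.
apply: Rep_allb => [|A]; first exact: enc_setT.
by rewrite inE bcnt_enc -enc_tri1 -enc_tri2 !(inj_eq (@enc_inj 5)).
Qed.

Theorem lemma2p5 :
  (excluded_minor (@classZ _) U24_U11 /\ excluded_minor (@classR _) U24_U11) /\
  (excluded_minor (@classZ _) U24_U01 /\ excluded_minor (@classR _) U24_U01) /\
  (excluded_minor (@classZ _) R6 /\ excluded_minor (@classR _) R6).
Proof.
split; [|split].
- by apply: (cexcluded_sound rep_U24_U11); vm_compute.
- by apply: (cexcluded_sound rep_U24_U01); vm_compute.
- by apply: (cexcluded_sound rep_R6); vm_compute.
Qed.
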